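(* Let $w$ be a partial permutation and $i\in\mathbb Z$ such that $w(i)$, $w(i+1)$ and $w(i+2)$ are defined and exactly one of $\overline i,\overline{i+1}$ lies in $R(w)$. Then there exists a unique partial permutation $w'$ connected to $w$ by a Knuth move such that $R(w')$ contains the other of $\overline i,\overline{i+1}$ and not the first one.
   Context: Fix $n\ge1$; $\overline i=i+n\mathbb Z$. A partial permutation is an injection $w:U\to\mathbb Z$, where $U\subseteq\mathbb Z$ satisfies $x\in U\iff x+n\in U$ and $w(i+n)=w(i)+n$. Its right descent set is $R(w)=\{\overline i: w(i)>w(i+1)\}$ (over $i$ with $w(i),w(i+1)$ defined). Two partial permutations $w,w'$ are connected by a Knuth move at position $\overline j$ if $w'(t)=w(t+1)$ and $w'(t+1)=w(t)$ for all $t\equiv j\pmod n$, $w'(t)=w(t)$ for all $t\not\equiv j,j+1\pmod n$, and at least one of $w(j+2),w(j-1)$ lies numerically between $w(j)$ and $w(j+1)$. *)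

From Stdlib Require Import ZArith.
Open Scope Z_scope.

(* w : Z -> option Z, w x = None means x is not in the domain U. *)
Definition PartialPerm (n : Z) (w : Z -> option Z) : Prop :=
  (forall x, w x <> None <-> w (x + n) <> None) /\
  (forall x a, w x = Some a -> w (x + n) = Some (a + n)) /\
  (forall x y a, w x = Some a -> w y = Some a -> x = y).

Definition defined (w : Z -> option Z) (x : Z) : Prop := exists a, w x = Some a.

(* residue class of j lies in the right descent set R(w) *)
Definition InR (n : Z) (w : Z -> option Z) (j : Z) : Prop :=
  exists i a b, (i - j) mod n = 0 /\ w i = Some a /\ w (i + 1) = Some b /\ a > b.

Definition between (c a b : Z) : Prop := (a < c < b) \/ (b < c < a).

Definition KnuthMove (n : Z) (w w' : Z -> option Z) (j : Z) : Prop :=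
  (forall t, (t - j) mod n = 0 -> w' t = w (t + 1) /\ w' (t + 1) = w t) /\
  (forall t, (t - j) mod n <> 0 -> (t - (j + 1)) mod n <> 0 -> w' t = w t) /\
  (exists a b c, w j = Some a /\ w (j + 1) = Some b /\
     (w (j + 2) = Some c \/ w (j - 1) = Some c) /\ between c a b).

Definition KnuthConnected (n : Z) (w w' : Z -> option Z) : Prop :=
  exists j, KnuthMove n w w' j.

From Pilot Require Import Defs.
From Stdlib Require Import ZArith Lia FunctionalExtensionality.
Open Scope Z_scope.

(* Because w(x + n) = w(x) + n, membership of a class in R(w) is read off any representative,
   and a Knuth move at j replaces w by w o s_j, where s_j is the n-periodic transposition of the
   classes of j and j + 1; so a move is determined by the class of j. With a, b, c the values at
   i, i + 1, i + 2, "exactly one descent" says that b is a peak or a valley, hence the middle one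
   of a, b, c is a or c. A move switching both descents must move position i + 1 (j = i or
   j = i + 1 mod n), and it is legal and switches exactly when the middle value witnesses it:
   c lies between a and b for j = i, a lies between b and c for j = i + 1. Only one of the two
   can happen, which gives existence and uniqueness. *)


Definition descent (w : Z -> option Z) (k : Z) : Prop :=
  match w k, w (k + 1) with Some x, Some y => y < x | _, _ => False end.

Definition knuth_legal (w : Z -> option Z) (j : Z) : Prop :=
  exists a b c, w j = Some a /\ w (j + 1) = Some b /\
    (w (j + 2) = Some c \/ w (j - 1) = Some c) /\ Defs.between c a b.

Definition between_opt (o : option Z) (a b : Z) : Prop :=
  match o with Some c => Defs.between c a b | None => False end.

Lemma knuth_legal_values w j a b : w j = Some a -> w (j + 1) = Some b ->
  knuth_legal w j <-> between_opt (w (j + 2)) a b \/ between_opt (w (j - 1)) a b.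
Proof.
  intros Ha Hb; unfold knuth_legal, between_opt; rewrite Ha, Hb; split.
  - intros (a' & b' & c & [= <-] & [= <-] & [-> | ->] & Hc); [left|right]; exact Hc.
  - intros [Hc|Hc]; [destruct (w (j + 2)) as [c|] eqn:Hw | destruct (w (j - 1)) as [c|] eqn:Hw];
      try contradiction; exists a, b, c; auto.
Qed.

Section Periodicity.

Variables (n : Z) (w : Z -> option Z).
Hypotheses (n_pos : 1 <= n) (w_pp : PartialPerm n w).

Lemma PartialPerm_step x a : w (x + n) = Some (a + n) <-> w x = Some a.
Proof.
  destruct w_pp as [dom_periodic [val_periodic _]]; split; [|apply val_periodic].
  intros Hxn; destruct (w x) as [a'|] eqn:Hx.
  - pose proof (val_periodic _ _ Hx) as E. rewrite Hxn in E. injection E as E. f_equal; lia.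
  - exfalso; apply (proj2 (dom_periodic x)); [rewrite Hxn; discriminate | exact Hx].
Qed.

Lemma PartialPerm_shift m x a : w x = Some a -> w (x + m * n) = Some (a + m * n).
Proof.
  revert x a; pattern m; apply Z.peano_ind; clear m.
  - intros x a Hx; rewrite !Z.mul_0_l, !Z.add_0_r; exact Hx.
  - intros m Hm x a Hx; specialize (Hm x a Hx); apply PartialPerm_step in Hm.
    replace (x + Z.succ m * n) with (x + m * n + n) by ring.
    replace (a + Z.succ m * n) with (a + m * n + n) by ring; exact Hm.
  - intros m Hm x a Hx; rewrite <- !Z.sub_1_r; apply PartialPerm_step; specialize (Hm x a Hx).
    replace (x + (m - 1) * n + n) with (x + m * n) by ring.
    replace (a + (m - 1) * n + n) with (a + m * n) by ring; exact Hm.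
Qed.

Lemma PartialPerm_congr x y a : (x - y) mod n = 0 -> w x = Some a -> w y = Some (a + (y - x)).
Proof.
  intros Hxy Hx; apply Z.mod_divide in Hxy as [m Hm]; [|lia].
  replace y with (x + (- m) * n) by lia; replace (a + _) with (a + (- m) * n) by lia.
  exact (PartialPerm_shift (- m) x a Hx).
Qed.

Lemma InR_descent k : InR n w k <-> descent w k.
Proof.
  unfold descent; split.
  - intros (k' & a & b & Hk & Ha & Hb & Hab).
    rewrite (PartialPerm_congr _ _ _ Hk Ha), (PartialPerm_congr (k' + 1) _ b); [lia| |exact Hb].
    replace (k' + 1 - (k + 1)) with (k' - k) by ring; exact Hk.
  - destruct (w k) as [a|] eqn:Ha, (w (k + 1)) as [b|] eqn:Hb; try contradiction.
    intros Hab; exists k, a, b; rewrite Z.sub_diag, Z.mod_0_l by lia; auto with zarith.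
Qed.

Lemma knuth_legal_congr j j' : (j - j') mod n = 0 -> knuth_legal w j -> knuth_legal w j'.
Proof.
  intros Hj (a & b & c & Ha & Hb & Hc & Hbetween).
  assert (Hshift : forall k x, w k = Some x -> w (k + (j' - j)) = Some (x + (j' - j))).
  { intros k x Hx; rewrite (PartialPerm_congr k _ x); [f_equal; ring| |exact Hx].
    replace (k - (k + (j' - j))) with (j - j') by ring; exact Hj. }
  exists (a + (j' - j)), (b + (j' - j)), (c + (j' - j)); split; [|split; [|split]].
  - replace j' with (j + (j' - j)) at 1 by ring; apply Hshift, Ha.
  - replace (j' + 1) with (j + 1 + (j' - j)) by ring; apply Hshift, Hb.
  - replace (j' + 2) with (j + 2 + (j' - j)) by ring.
    replace (j' - 1) with (j - 1 + (j' - j)) by ring.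
    destruct Hc as [Hc|Hc]; [left|right]; apply Hshift, Hc.
  - unfold Defs.between in *; lia.
Qed.

End Periodicity.

Definition swap (n j t : Z) : Z :=
  if (t - j) mod n =? 0 then t + 1 else if (t - (j + 1)) mod n =? 0 then t - 1 else t.

Section Swap.

Variable n : Z.
Hypothesis n_ge2 : 2 <= n.

Lemma mod_congr_sub x y y' : (y - y') mod n = 0 -> (x - y) mod n = (x - y') mod n.
Proof.
  intros Hy; apply Z.mod_divide in Hy as [m Hm]; [|lia].
  replace (x - y) with (x - y' + (- m) * n) by lia; apply Z.mod_add; lia.
Qed.

Lemma sub_mod_eqb0 k r : 0 <= r < n -> ((k - r) mod n =? 0) = (r =? k mod n).
Proof.
  intros Hr; apply Bool.eq_iff_eq_true; rewrite !Z.eqb_eq; split.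
  - intros Hk; apply Z.mod_divide in Hk as [m Hm]; [|lia].
    apply (Z.mod_unique k n m); lia.
  - intros ->; rewrite Zminus_mod_idemp_r, Z.sub_diag; apply Z.mod_0_l; lia.
Qed.

Lemma swap_add_period j t : swap n j (t + n) = swap n j t + n.
Proof.
  unfold swap.
  replace (t + n - j) with (t - j + 1 * n) by ring.
  replace (t + n - (j + 1)) with (t - (j + 1) + 1 * n) by ring.
  rewrite !Z.mod_add by lia.
  destruct (_ =? 0); [ring|]; destruct (_ =? 0); ring.
Qed.

Lemma swap_left j t : (t - j) mod n = 0 -> swap n j t = t + 1.
Proof. intros Hl; unfold swap; rewrite Hl; reflexivity. Qed.

Lemma swap_right j t : (t - j) mod n = 0 -> swap n j (t + 1) = t.
Proof.
  intros Hl; unfold swap.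
  replace (t + 1 - (j + 1)) with (t - j) by ring; rewrite Hl.
  replace ((t + 1 - j) mod n =? 0) with false; [simpl; ring|].
  symmetry; apply Z.eqb_neq; replace (t + 1 - j) with (t - j + 1) by ring.
  rewrite Zplus_mod, Hl, Z.add_0_l, !(Z.mod_small 1) by lia; lia.
Qed.

Lemma swap_fixed j t : (t - j) mod n <> 0 -> (t - (j + 1)) mod n <> 0 -> swap n j t = t.
Proof. intros Hl Hr; unfold swap; apply Z.eqb_neq in Hl, Hr; rewrite Hl, Hr; reflexivity. Qed.

Lemma swap_involutive j t : swap n j (swap n j t) = t.
Proof.
  destruct (Z.eq_dec ((t - j) mod n) 0) as [Hl|Hl].
  - rewrite (swap_left j t Hl), (swap_right j t Hl); reflexivity.
  - destruct (Z.eq_dec ((t - (j + 1)) mod n) 0) as [Hr|Hr].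
    + replace (t - (j + 1)) with (t - 1 - j) in Hr by ring.
      replace t with (t - 1 + 1) by ring.
      rewrite (swap_right j _ Hr), (swap_left j _ Hr); ring.
    + rewrite (swap_fixed j t Hl Hr), (swap_fixed j t Hl Hr); reflexivity.
Qed.

Lemma swap_congr j j' t : (j - j') mod n = 0 -> swap n j t = swap n j' t.
Proof.
  intros Hj; unfold swap; rewrite (mod_congr_sub t _ _ Hj), (mod_congr_sub t (j + 1) (j' + 1)).
  - reflexivity.
  - replace (j + 1 - (j' + 1)) with (j - j') by ring; exact Hj.
Qed.

Lemma swap_offset j i k :
  swap n j (i + k) = if (j - i) mod n =? k mod n then i + k + 1
                     else if (j - i) mod n =? (k - 1) mod n then i + k - 1 else i + k.
Proof.
  pose proof (Z.mod_pos_bound (j - i) n ltac:(lia)) as Hr.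
  unfold swap.
  replace (i + k - j) with (k - (j - i)) by ring.
  replace (i + k - (j + 1)) with (k - 1 - (j - i)) by ring.
  rewrite <- (Zminus_mod_idemp_r k), <- (Zminus_mod_idemp_r (k - 1)), !sub_mod_eqb0 by exact Hr.
  reflexivity.
Qed.

Lemma swap_window j i r : (j - i) mod n = r ->
  swap n j i = (if r =? 0 then i + 1 else if r =? n - 1 then i - 1 else i) /\
  swap n j (i + 1) = (if r =? 1 then i + 2 else if r =? 0 then i else i + 1) /\
  swap n j (i + 2) = (if r =? 2 mod n then i + 3 else if r =? 1 then i + 1 else i + 2).
Proof.
  intros Hr.
  pose proof (swap_offset j i 0) as H0; rewrite Z.add_0_r in H0.
  pose proof (swap_offset j i 1) as H1; pose proof (swap_offset j i 2) as H2.
  replace ((0 - 1) mod n) with (n - 1) in H0 by (apply (Z.mod_unique _ _ (-1)); lia).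
  rewrite Hr, Z.mod_0_l in H0 by lia.
  rewrite Hr, Z.sub_diag, Z.mod_0_l, Z.mod_small in H1 by lia.
  rewrite Hr, (Z.mod_small (2 - 1)) in H2 by lia.
  rewrite H0, H1, H2; repeat split; repeat destruct (_ =? _); ring.
Qed.

Lemma swap_window_at i :
  swap n i i = i + 1 /\ swap n i (i + 1) = i /\
  swap n i (i + 2) = (if n =? 2 then i + 3 else i + 2).
Proof.
  assert (Hr : (i - i) mod n = 0) by (rewrite Z.sub_diag; apply Z.mod_0_l; lia).
  destruct (swap_window i i 0 Hr) as (-> & -> & ->).
  split; [reflexivity|split; [reflexivity|]].
  destruct (Z.eqb_spec n 2) as [->|Hn]; [reflexivity|].
  rewrite (Z.mod_small 2) by lia; reflexivity.
Qed.

Lemma swap_window_succ i :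
  swap n (i + 1) i = (if n =? 2 then i - 1 else i) /\ swap n (i + 1) (i + 1) = i + 2 /\
  swap n (i + 1) (i + 2) = i + 1.
Proof.
  assert (Hr : (i + 1 - i) mod n = 1).
  { replace (i + 1 - i) with 1 by ring; apply Z.mod_small; lia. }
  destruct (swap_window (i + 1) i 1 Hr) as (-> & -> & ->).
  split; [|split; [reflexivity|]]; destruct (Z.eqb_spec n 2) as [->|Hn]; try reflexivity.
  - replace (1 =? n - 1) with false by (symmetry; apply Z.eqb_neq; lia); reflexivity.
  - rewrite (Z.mod_small 2) by lia; reflexivity.
Qed.

Lemma PartialPerm_swap w j : PartialPerm n w -> PartialPerm n (fun t => w (swap n j t)).
Proof.
  intros (dom_periodic & val_periodic & inj); split; [|split].
  - intros x; rewrite swap_add_period; apply dom_periodic.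
  - intros x a Hx; rewrite swap_add_period; apply val_periodic, Hx.
  - intros x y a Hx Hy.
    rewrite <- (swap_involutive j x), <- (swap_involutive j y), (inj _ _ _ Hx Hy); reflexivity.
Qed.

Lemma KnuthMove_swap w w' j :
  KnuthMove n w w' j <-> (forall t, w' t = w (swap n j t)) /\ knuth_legal w j.
Proof.
  split.
  - intros (moved & fixed & legal); split; [intros t|exact legal].
    destruct (Z.eq_dec ((t - j) mod n) 0) as [Hl|Hl];
      [|destruct (Z.eq_dec ((t - (j + 1)) mod n) 0) as [Hr|Hr]].
    + rewrite swap_left by exact Hl; apply moved, Hl.
    + replace (t - (j + 1)) with (t - 1 - j) in Hr by ring.
      replace t with (t - 1 + 1) by ring.
      rewrite swap_right by exact Hr; apply moved, Hr.
    + rewrite swap_fixed by assumption; apply fixed; assumption.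
  - intros [Hw' legal]; split; [|split; [|exact legal]].
    + intros t Hl; rewrite !Hw', swap_left, swap_right by exact Hl; split; reflexivity.
    + intros t Hl Hr; rewrite Hw', swap_fixed by assumption; reflexivity.
Qed.

End Swap.

Definition descent_switched (w w' : Z -> option Z) (i : Z) : Prop :=
  (descent w i -> descent w' (i + 1) /\ ~ descent w' i) /\
  (descent w (i + 1) -> descent w' i /\ ~ descent w' (i + 1)).

Section PeakOrValley.

Variables (n : Z) (w : Z -> option Z) (i a b c : Z).
Hypotheses (n_ge2 : 2 <= n) (w_pp : PartialPerm n w).
Hypotheses (w_i : w i = Some a) (w_i1 : w (i + 1) = Some b) (w_i2 : w (i + 2) = Some c).
Hypothesis b_extreme : (b < a /\ b < c) \/ (a < b /\ c < b).

Lemma a_neq_c : a <> c.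
Proof.
  intros ->; destruct w_pp as (_ & _ & inj).
  pose proof (inj _ _ _ w_i w_i2); lia.
Qed.

Lemma value_shift x v m y : w x = Some v -> y = x + m * n -> w y = Some (v + m * n).
Proof. intros Hx ->; exact (PartialPerm_shift n w w_pp m x v Hx). Qed.

Lemma period2_values : n = 2 -> c = a + 2 /\ w (i - 1) = Some (b - 2) /\ w (i + 3) = Some (b + 2).
Proof.
  intros Hn; split; [|split].
  - pose proof (value_shift i a 1 (i + 2) w_i ltac:(lia)) as Hc; rewrite w_i2 in Hc.
    assert (c = a + 1 * n) by congruence; lia.
  - rewrite (value_shift (i + 1) b (-1) (i - 1) w_i1 ltac:(lia)); f_equal; lia.
  - rewrite (value_shift (i + 1) b 1 (i + 3) w_i1 ltac:(lia)); f_equal; lia.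
Qed.

Lemma period3_values : n = 3 -> w (i - 1) = Some (c - 3) /\ w (i + 3) = Some (a + 3).
Proof.
  intros Hn; split.
  - rewrite (value_shift (i + 2) c (-1) (i - 1) w_i2 ltac:(lia)); f_equal; lia.
  - rewrite (value_shift i a 1 (i + 3) w_i ltac:(lia)); f_equal; lia.
Qed.

(* If i + 1 is not moved, both neighbours of b must be replaced, which forces n = 3. *)
Lemma switching_swap_class j :
  descent_switched w (fun t => w (swap n j t)) i -> (j - i) mod n = 0 \/ (j - i) mod n = 1.
Proof.
  intros Hsw; pose proof (Z.mod_pos_bound (j - i) n ltac:(lia)) as Hr.
  set (r := (j - i) mod n) in *.
  destruct (swap_window n n_ge2 j i r eq_refl) as (Hs0 & Hs1 & Hs2).
  unfold descent_switched, descent in Hsw; cbv beta in Hsw.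
  replace (i + 1 + 1) with (i + 2) in Hsw by ring.
  rewrite Hs0, Hs1, Hs2, w_i, w_i1, w_i2 in Hsw.
  destruct (Z.eq_dec r 0); [now left|]; destruct (Z.eq_dec r 1); [now right|exfalso].
  rewrite (proj2 (Z.eqb_neq r 1)), (proj2 (Z.eqb_neq r 0)), w_i1 in Hsw by assumption.
  destruct (Z.eqb_spec r (n - 1)), (Z.eqb_spec r (2 mod n)); rewrite ?w_i, ?w_i2 in Hsw.
  - assert (Hn3 : n = 3).
    { destruct (Z.eq_dec n 2) as [Hn|Hn]; [rewrite Hn in *; simpl in *; lia|].
      rewrite Z.mod_small in * by lia; lia. }
    destruct (period3_values Hn3) as [Hprev Hnext]; rewrite Hprev, Hnext in Hsw; lia.
  - destruct (w (i - 1)); lia.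
  - destruct (w (i + 3)); lia.
  - lia.
Qed.

Lemma knuth_switch_at_iff :
  knuth_legal w i /\ descent_switched w (fun t => w (swap n i t)) i <-> Defs.between c a b.
Proof.
  destruct (swap_window_at n n_ge2 i) as (Hs0 & Hs1 & Hs2).
  rewrite (knuth_legal_values w i a b w_i w_i1).
  unfold descent_switched, descent, between_opt, Defs.between; cbv beta.
  replace (i + 1 + 1) with (i + 2) by ring.
  rewrite Hs0, Hs1, Hs2; pose proof a_neq_c.
  destruct (Z.eqb_spec n 2) as [Hn|Hn]; rewrite w_i, w_i1, w_i2.
  - destruct (period2_values Hn) as (Hc & -> & ->); intuition lia.
  - destruct (w (i - 1)); intuition lia.
Qed.

Lemma knuth_switch_succ_iff :
  knuth_legal w (i + 1) /\ descent_switched w (fun t => w (swap n (i + 1) t)) i <->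
  Defs.between a b c.
Proof.
  destruct (swap_window_succ n n_ge2 i) as (Hs0 & Hs1 & Hs2).
  rewrite (knuth_legal_values w (i + 1) b c w_i1 ltac:(rewrite <- Z.add_assoc; exact w_i2)).
  unfold descent_switched, descent, between_opt, Defs.between; cbv beta.
  replace (i + 1 + 1) with (i + 2) by ring.
  replace (i + 1 + 2) with (i + 3) by ring.
  replace (i + 1 - 1) with i by ring.
  rewrite Hs0, Hs1, Hs2; pose proof a_neq_c.
  destruct (Z.eqb_spec n 2) as [Hn|Hn]; rewrite w_i, w_i1, w_i2.
  - destruct (period2_values Hn) as (Hc & -> & ->); intuition lia.
  - destruct (w (i + 3)); intuition lia.
Qed.

Lemma knuth_switch_unique_class :
  exists j0, (knuth_legal w j0 /\ descent_switched w (fun t => w (swap n j0 t)) i) /\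
    forall j, knuth_legal w j -> descent_switched w (fun t => w (swap n j t)) i ->
      (j - j0) mod n = 0.
Proof.
  assert (Hreduce : forall j j0, (j - j0) mod n = 0 ->
    knuth_legal w j -> descent_switched w (fun t => w (swap n j t)) i ->
    knuth_legal w j0 /\ descent_switched w (fun t => w (swap n j0 t)) i).
  { intros j j0 Hj Hlegal Hsw; split; [exact (knuth_legal_congr n w ltac:(lia) w_pp j j0 Hj Hlegal)|].
    replace (fun t => w (swap n j0 t)) with (fun t => w (swap n j t)); [exact Hsw|].
    apply functional_extensionality; intros t; rewrite (swap_congr n n_ge2 j j0 t Hj); reflexivity. }
  assert (Hsucc : forall j, (j - i) mod n = 1 -> (j - (i + 1)) mod n = 0).
  { intros j Hj; replace (j - (i + 1)) with (j - i - 1) by ring.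
    rewrite <- Zminus_mod_idemp_l, Hj; apply Z.mod_0_l; lia. }
  assert (Hmiddle : Defs.between c a b \/ Defs.between a b c).
  { pose proof a_neq_c; unfold Defs.between; lia. }
  pose proof knuth_switch_at_iff as Hat; pose proof knuth_switch_succ_iff as Hnext.
  unfold Defs.between in *.
  destruct Hmiddle as [Hmiddle|Hmiddle]; [exists i | exists (i + 1)];
    (split; [tauto|]); intros j Hlegal Hsw; destruct (switching_swap_class j Hsw) as [Hj|Hj].
  - exact Hj.
  - destruct (Hreduce _ _ (Hsucc j Hj) Hlegal Hsw); exfalso; intuition lia.
  - destruct (Hreduce _ _ Hj Hlegal Hsw); exfalso; intuition lia.
  - exact (Hsucc j Hj).
Qed.

End PeakOrValley.

Lemma period1_no_descent w k : PartialPerm 1 w -> ~ descent w k.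
Proof.
  intros Hw; unfold descent; destruct (w k) as [a|] eqn:Hk; [|tauto].
  pose proof (PartialPerm_shift 1 w Hw 1 k a Hk) as Hk1; rewrite !Z.mul_1_l in Hk1.
  rewrite Hk1; lia.
Qed.

Lemma InR_switched_iff n w w' i : 1 <= n -> PartialPerm n w -> PartialPerm n w' ->
  ((InR n w i -> InR n w' (i + 1) /\ ~ InR n w' i) /\
   (InR n w (i + 1) -> InR n w' i /\ ~ InR n w' (i + 1)) <-> descent_switched w w' i).
Proof.
  intros Hn Hw Hw'; unfold descent_switched.
  rewrite !(InR_descent n w Hn Hw), !(InR_descent n w' Hn Hw'); reflexivity.
Qed.

Theorem proposition3p8 (n : Z) (w : Z -> option Z) (i : Z) :
  1 <= n ->
  PartialPerm n w ->
  defined w i -> defined w (i + 1) -> defined w (i + 2) ->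
  (InR n w i <-> ~ InR n w (i + 1)) ->
  exists! w' : Z -> option Z,
    PartialPerm n w' /\ KnuthConnected n w w' /\
    (InR n w i -> InR n w' (i + 1) /\ ~ InR n w' i) /\
    (InR n w (i + 1) -> InR n w' i /\ ~ InR n w' (i + 1)).
Proof.
  intros Hn Hw [a Ha] [b Hb] [c Hc] Hexact.
  rewrite !(InR_descent n w Hn Hw) in Hexact.
  assert (Hn2 : 2 <= n).
  { destruct (Z.eq_dec n 1) as [->|]; [|lia].
    pose proof (period1_no_descent w i Hw); pose proof (period1_no_descent w (i + 1) Hw); tauto. }
  assert (b_extreme : (b < a /\ b < c) \/ (a < b /\ c < b)).
  { destruct Hw as (_ & _ & inj).
    assert (a <> b) by (intros ->; pose proof (inj _ _ _ Ha Hb); lia).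
    assert (b <> c) by (intros ->; pose proof (inj _ _ _ Hb Hc); lia).
    unfold descent in Hexact; replace (i + 1 + 1) with (i + 2) in Hexact by ring.
    rewrite Ha, Hb, Hc in Hexact; lia. }
  destruct (knuth_switch_unique_class n w i a b c Hn2 Hw Ha Hb Hc b_extreme)
    as (j0 & [Hlegal Hsw] & Hunique).
  pose proof (PartialPerm_swap n Hn2 w j0 Hw) as Hw0.
  exists (fun t => w (swap n j0 t)); split.
  - split; [exact Hw0|split; [exists j0; apply KnuthMove_swap; auto|]].
    apply InR_switched_iff; assumption.
  - intros w' (Hw' & [j Hmove] & Hsw').
    apply (KnuthMove_swap n Hn2) in Hmove as [Hw'_eq Hlegal'].
    apply (InR_switched_iff n w w' i Hn Hw Hw') in Hsw'.
    apply functional_extensionality in Hw'_eq; subst w'.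
    apply functional_extensionality; intros t.
    rewrite (swap_congr n Hn2 j j0 t (Hunique j Hlegal' Hsw')); reflexivity.
Qed.
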